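(* In the event-driven HotStuff implementation (as defined in the context), let $b$ and $w$ be two conflicting nodes such that $b.\mathit{height} = w.\mathit{height}$. Then $b$ and $w$ cannot both have valid quorum certificates.
   Context: There are $n = 3f+1$ replicas, at most $f$ of which are Byzantine; the others are honest. Messages are signed with unforgeable signatures. Replicas build a tree of nodes; each node $b$ has a parent $b.\mathit{parent}$, a height $b.\mathit{height}$ equal to its parent's height plus one, a command $b.\mathit{cmd}$, and a quorum certificate $b.\mathit{justify}$. A (valid) quorum certificate (QC) for a node $x$ consists of votes for $x$ signed by $2f+1$ distinct replicas; $\mathit{qc}.\mathit{node}$ denotes the node it refers to. Two nodes are conflicting if neither is an ancestor-or-equal of the other. Voting rule of an honest replica: it keeps a variable $\mathit{vheight}$ (height of the last node it voted for) and a locked node $b_{\mathit{lock}}$. Upon receiving a proposal $b_{\mathit{new}}$, it votes for $b_{\mathit{new}}$ only if $b_{\mathit{new}}.\mathit{height} > \mathit{vheight}$ and ($b_{\mathit{new}}$ extends $b_{\mathit{lock}}$ or $b_{\mathit{new}}.\mathit{justify}.\mathit{node}.\mathit{height} > b_{\mathit{lock}}.\mathit{height}$); when it votes it sets $\mathit{vheight} \leftarrow b_{\mathit{new}}.\mathit{height}$. In particular an honest replica votes at most once per height. *)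

From mathcomp Require Import all_boot.
Set Implicit Arguments. Unset Strict Implicit. Unset Printing Implicit Defensive.

(* Block tree: a node type N with a partial parent map (the genesis/root
   node has no parent).  [qcnode b] is b.justify.node. *)

Definition ancestor_or_equal (N : Type) (parent : N -> option N) (a b : N) : Prop :=
  exists k : nat, iter k (fun o => obind parent o) (Some b) = Some a.

Definition extends (N : Type) (parent : N -> option N) (b a : N) : Prop :=
  ancestor_or_equal parent a b.

Definition conflicting (N : Type) (parent : N -> option N) (a b : N) : Prop :=
  ~ ancestor_or_equal parent a b /\ ~ ancestor_or_equal parent b a.

Definition well_formed_tree (N : Type) (parent : N -> option N) (height : N -> nat) :=
  forall b p, parent b = Some p -> height b = (height p).+1.

(* A valid QC for x: votes for x signed by 2f+1 distinct replicas among
   the n = 3f+1 replicas; [signed r x] means a vote for x signed by r exists. *)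
Definition valid_qc (N : Type) (f : nat) (signed : 'I_(3 * f + 1) -> N -> Prop)
  (x : N) : Prop :=
  exists S : {set 'I_(3 * f + 1)}, #|S| = (2 * f + 1)%N /\ forall r, r \in S -> signed r x.

(* The sequence of votes cast by an honest replica, in chronological order.
   Each entry is (b_new, b_lock): the proposal voted for and the replica's
   locked node at that moment.  [vh] is the current value of vheight. *)
Fixpoint honest_vote_history (N : Type) (parent : N -> option N) (height : N -> nat)
  (qcnode : N -> N) (vh : nat) (tr : seq (N * N)) : Prop :=
  match tr with
  | [::] => True
  | (bnew, block) :: tr' =>
      [/\ vh < height bnew,
          extends parent bnew block \/ height block < height (qcnode bnew)
        & honest_vote_history parent height qcnode (height bnew) tr']
  end.

From Stdlib Require List.
From mathcomp Require Import all_boot.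
From mathcomp Require Import zify.

Set Implicit Arguments.
Unset Strict Implicit.
Unset Printing Implicit Defensive.

(* Two quorums of 2f+1 among 3f+1 replicas share at least f+1 replicas, so at least one
   honest replica voted for both b and w.  Heights strictly increase along an
   honest vote history, so that replica voted for two nodes of the same height
   only if they are equal; but conflicting nodes are distinct. *)

Section HonestVoteHistory.

Variables (N : Type) (parent : N -> option N) (height : N -> nat) (qcnode : N -> N).

Lemma honest_vote_history_height_gt tr vh :
  honest_vote_history parent height qcnode vh tr ->
  forall x, List.In x (map fst tr) -> vh < height x.
Proof.
elim: tr vh => [|[bnew block] tr IH] vh //= [vh_lt _ Htr] x [<- //|x_tr].
by apply: ltn_trans vh_lt (IH _ Htr x x_tr).
Qed.

Lemma honest_vote_history_height_inj tr vh :
  honest_vote_history parent height qcnode vh tr ->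
  forall x y, List.In x (map fst tr) -> List.In y (map fst tr) ->
  height x = height y -> x = y.
Proof.
elim: tr vh => [|[bnew block] tr IH] vh //= [_ _ Htr] x y.
have later_gt z : List.In z (map fst tr) -> height bnew < height z.
  exact: honest_vote_history_height_gt Htr z.
case=> [<-|x_tr] [<-|y_tr] // Exy.
- by have := later_gt y y_tr; rewrite Exy ltnn.
- by have := later_gt x x_tr; rewrite Exy ltnn.
- exact: IH Htr x y x_tr y_tr Exy.
Qed.

End HonestVoteHistory.

Lemma quorum_intersection (T : finType) (A B Z : {set T}) :
  #|T| + #|Z| < #|A| + #|B| -> exists2 r, r \in A :&: B & r \notin Z.
Proof.
move=> big_quorums.
have [AB_sub_Z|/subsetPn [r r_AB r_Z]] := boolP (A :&: B \subset Z); last by exists r.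
have := subset_leq_card AB_sub_Z; have := max_card (A :|: B); have := cardsUI A B.
lia.
Qed.

Lemma conflicting_neq (N : Type) (parent : N -> option N) (a b : N) :
  conflicting parent a b -> a <> b.
Proof. by case=> not_anc _ Eab; apply: not_anc; exists 0; rewrite Eab. Qed.

Theorem mainTheorem2
  (f : nat) (N : Type) (parent : N -> option N) (height : N -> nat) (qcnode : N -> N)
  (Htree : well_formed_tree parent height)
  (byz : {set 'I_(3 * f + 1)}) (Hbyz : #|byz| <= f)
  (signed : 'I_(3 * f + 1) -> N -> Prop)
  (hist : 'I_(3 * f + 1) -> seq (N * N))
  (vheight0 : nat)
  (Hhonest : forall r, r \notin byz ->
      honest_vote_history parent height qcnode vheight0 (hist r) /\
      (forall x, signed r x -> List.In x (map fst (hist r))))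
  (b w : N) (Hconf : conflicting parent b w) (Hh : height b = height w) :
  ~ (valid_qc signed b /\ valid_qc signed w).
Proof.
case=> [[Sb [card_Sb signed_b]] [Sw [card_Sw signed_w]]].
have [|r /setIP [r_Sb r_Sw] r_honest] := @quorum_intersection _ Sb Sw byz.
  by rewrite card_ord card_Sb card_Sw; lia.
have [Hhist voted] := Hhonest r r_honest.
apply: (conflicting_neq Hconf).
exact: honest_vote_history_height_inj Hhist b w
  (voted _ (signed_b r r_Sb)) (voted _ (signed_w r r_Sw)) Hh.
Qed.
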